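(* Let $G$ be a compact group, $H$ a normal subgroup of $G$, $K=G/H$ with quotient map $g\mapsto[g]$. Let $(l_n)_{n\in\mathbb{N}}$ be continuous length functions on $G$ converging uniformly on $G$ to a function $\widetilde{l_\infty}$ with $\widetilde{l_\infty}(g)=0$ for $g\in H$ and $\widetilde{l_\infty}(g)>0$ for $g\notin H$. Then there exists a continuous length function $l_\infty$ on $K$ such that $l_n(g)\to l_\infty([g])$ as $n\to\infty$ for all $g\in G$.
   Context: A length function on a group with unit $e$: $l\ge0$, $l(g)=0$ iff $g=e$, $l(g^{-1})=l(g)$, $l(gh)\le l(g)+l(h)$. *)

From HB Require Import structures.
From mathcomp Require Import all_boot all_order all_algebra generic_quotient.
From mathcomp Require Import all_classical all_reals all_analysis.
Set Implicit Arguments. Unset Strict Implicit. Unset Printing Implicit Defensive.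
Import Order.TTheory GRing.Theory Num.Theory.
Local Open Scope classical_set_scope.
Local Open Scope ring_scope.
Local Open Scope quotient_scope.

Record topGroup (T : topologicalType) := TopGroup {
  gmul : T -> T -> T;
  ginv : T -> T;
  gone : T;
  gmulA : forall x y z, gmul x (gmul y z) = gmul (gmul x y) z;
  gmul1 : forall x, gmul gone x = x;
  gmulg1 : forall x, gmul x gone = x;
  gmulV : forall x, gmul (ginv x) x = gone;
  gmulgV : forall x, gmul x (ginv x) = gone;
  gmul_cont : continuous (fun p : T * T => gmul p.1 p.2);
  ginv_cont : continuous ginv }.

Record normalSubgroup (T : topologicalType) (G : topGroup T) := NormalSubgroup {
  nsg_set : set T;
  nsg_one : nsg_set (gone G);
  nsg_mul : forall x y, nsg_set x -> nsg_set y -> nsg_set (gmul G x y);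
  nsg_inv : forall x, nsg_set x -> nsg_set (ginv G x);
  nsg_conj : forall g x, nsg_set x -> nsg_set (gmul G (gmul G (ginv G g) x) g) }.

Definition is_length_function (T : Type) (R : realType)
    (mul : T -> T -> T) (inv : T -> T) (one : T) (l : T -> R) :=
  [/\ forall g, 0 <= l g,
      forall g, l g = 0 <-> g = one,
      forall g, l (inv g) = l g &
      forall g h, l (mul g h) <= l g + l h].

Section Quot.
Context (T : topologicalType) (G : topGroup T) (H : normalSubgroup G).
Local Notation "x * y" := (gmul G x y).
Local Notation "x ^-1" := (ginv G x).

(* x ~ y iff x^-1 y in H, i.e. x H = y H *)
Definition cosrel (x y : T) : bool := `[< nsg_set H (x^-1 * y) >].

Lemma inv_uniq (a h : T) : a * h = gone G -> a = h^-1.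
Proof.
move=> e. by rewrite -(gmulg1 G a) -(gmulgV G h) gmulA e gmul1.
Qed.

Lemma cosrel_refl : reflexive cosrel.
Proof. by move=> x; apply/asboolP; rewrite gmulV; exact: nsg_one. Qed.

Lemma cosrel_sym : symmetric cosrel.
Proof.
suff S : forall x y, cosrel x y -> cosrel y x.
  by move=> x y; apply/idP/idP; apply: S.
move=> x y /asboolP hxy; apply/asboolP.
have -> : y^-1 * x = (x^-1 * y)^-1.
  apply: inv_uniq.
  by rewrite gmulA -(gmulA G _ x) gmulgV gmulg1 gmulV.
exact: nsg_inv.
Qed.

Lemma cosrel_trans : transitive cosrel.
Proof.
move=> y x z /asboolP hxy /asboolP hyz; apply/asboolP.
have -> : x^-1 * z = (x^-1 * y) * (y^-1 * z).
  by rewrite gmulA -(gmulA G _ y) gmulgV gmulg1.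
exact: nsg_mul.
Qed.

Definition cosEquiv : equiv_rel T := EquivRel cosrel cosrel_refl cosrel_sym cosrel_trans.

Definition quotGroup := quotient_topology {eq_quot cosEquiv}.

Definition qmap (g : T) : quotGroup := \pi_quotGroup g.
Definition qmul (a b : quotGroup) : quotGroup := qmap (repr a * repr b).
Definition qinv (a : quotGroup) : quotGroup := qmap ((repr a)^-1).
Definition qone : quotGroup := qmap (gone G).
End Quot.

(* The limit l~ of the lengths l_n is again nonnegative, symmetric and
   subadditive, and it is continuous as a uniform limit of continuous
   functions. Subadditivity and vanishing on H make l~ constant on the cosets
   of H, so it descends to a continuous function on K = G/H, and positivity
   off H makes the descended function vanish only at the unit of K. *)

From HB Require Import structures.
From mathcomp Require Import all_boot all_order all_algebra generic_quotient.
From mathcomp Require Import all_classical all_reals all_analysis.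
From mathcomp Require Import lra.

Set Implicit Arguments.
Unset Strict Implicit.
Unset Printing Implicit Defensive.
Import Order.TTheory GRing.Theory Num.Theory numFieldNormedType.Exports.
Local Open Scope classical_set_scope.
Local Open Scope ring_scope.
Local Open Scope quotient_scope.

Definition uniformly_cvg {T : Type} {R : numFieldType}
    (f : nat -> T -> R) (g : T -> R) :=
  forall eps : R, 0 < eps ->
    exists N : nat, forall n, (N <= n)%N -> forall x, `|f n x - g x| < eps.

Section UniformLimit.
Context {R : realFieldType} {T : topologicalType} {f : nat -> T -> R} {g : T -> R}.
Hypothesis f_unif : uniformly_cvg f g.

Lemma uniformly_cvg_pointwise (x : T) : f n x @[n --> \oo] --> g x.
Proof.
apply/cvgrPdist_lt => e e0; have [N fN] := f_unif e0.
by exists N => // n /= leNn; rewrite distrC; apply: fN.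
Qed.

Lemma uniformly_cvg_continuous : (forall n, continuous (f n)) -> continuous g.
Proof.
move=> f_cont x; apply/cvgrPdist_lt => e e0.
have e3 : 0 < e / 3 by rewrite divr_gt0.
have [N fN] := f_unif e3.
have fNx := fN N (leqnn N) x.
have := f_cont N x => /cvgrPdist_lt /(_ _ e3); apply: filterS => y fNy.
have fNy' := fN N (leqnn N) y.
move: fNx fNy fNy'; rewrite !ltr_norml => /andP[? ?] /andP[? ?] /andP[? ?].
by apply/andP; split; lra.
Qed.

End UniformLimit.

Definition is_pseudo_length {T : Type} {R : realType}
    (mul : T -> T -> T) (inv : T -> T) (l : T -> R) :=
  [/\ forall g, 0 <= l g,
      forall g, l (inv g) = l g &
      forall g h, l (mul g h) <= l g + l h].

Section PseudoLength.
Context {T : Type} {R : realType} {mul : T -> T -> T} {inv : T -> T}.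

Lemma length_function_pseudo (one : T) (l : T -> R) :
  is_length_function mul inv one l -> is_pseudo_length mul inv l.
Proof. by case. Qed.

Lemma cvg_pseudo_length (l : nat -> T -> R) (L : T -> R) :
  (forall n, is_pseudo_length mul inv (l n)) ->
  (forall g, l n g @[n --> \oo] --> L g) ->
  is_pseudo_length mul inv L.
Proof.
move=> l_len l_cvg; split.
- move=> g; apply: ler_cvg_to (cvg_cst 0) (l_cvg g) _.
  by apply: nearW => n; case: (l_len n).
- move=> g; have := l_cvg (inv g).
  have -> : (fun n => l n (inv g)) = (fun n => l n g).
    by apply/funext => n; case: (l_len n).
  by move=> lg; rewrite (cvg_unique _ (l_cvg g) lg).
- move=> g h; apply: ler_cvg_to (l_cvg (mul g h)) (cvgD (l_cvg g) (l_cvg h)) _.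
  by apply: nearW => n; case: (l_len n).
Qed.

End PseudoLength.

Section Quotient.
Context {R : realType} {T : topologicalType} {G : topGroup T} {H : normalSubgroup G}.
Local Notation "x * y" := (gmul G x y).
Local Notation "x ^-1" := (ginv G x).

Lemma ginv1 : (gone G)^-1 = gone G.
Proof. by symmetry; apply: inv_uniq; rewrite gmul1. Qed.

Lemma qmap_eqP (x y : T) : qmap H x = qmap H y <-> cosrel H x y.
Proof. by split => [/eqmodP | xy]; last apply/eqmodP. Qed.

Lemma qmap_eq_qone (x : T) : qmap H x = qone H <-> nsg_set H x.
Proof.
rewrite /qone qmap_eqP cosrel_sym.
by split => [/asboolP | Hx]; [|apply/asboolP]; rewrite ginv1 gmul1.
Qed.

Lemma cosrel_repr_qmap (x : T) : cosrel H (repr (qmap H x)) x.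
Proof. by apply/qmap_eqP; rewrite /qmap reprK. Qed.

Lemma pseudo_length_cosrel (L : T -> R) :
  is_pseudo_length (gmul G) (ginv G) L ->
  (forall h, nsg_set H h -> L h = 0) ->
  forall x y, cosrel H x y -> L x = L y.
Proof.
case=> _ _ Lsub LH.
suff Lle : forall x y, cosrel H x y -> L y <= L x.
  by move=> x y xy; apply/eqP; rewrite eq_le !Lle // cosrel_sym.
move=> x y /asboolP xy.
have -> : y = x * (x^-1 * y) by rewrite gmulA gmulgV gmul1.
by rewrite -[leRHS]addr0 -(LH _ xy) Lsub.
Qed.

Definition qinduced (L : T -> R) (q : quotGroup H) : R := L (repr q).

Section Induced.
Context {L : T -> R}.
Hypothesis L_cosrel : forall x y, cosrel H x y -> L x = L y.

Lemma qinducedE (x : T) : qinduced L (qmap H x) = L x.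
Proof. exact/L_cosrel/cosrel_repr_qmap. Qed.

Lemma qinduced_continuous : continuous L -> continuous (qinduced L).
Proof.
move=> L_cont; apply/quotient_continuous.
by have -> : qinduced L \o \pi_(quotGroup H) = L by apply/funext => x; exact: qinducedE.
Qed.

Lemma qinduced_length :
  is_pseudo_length (gmul G) (ginv G) L ->
  (forall g, L g = 0 <-> nsg_set H g) ->
  is_length_function (@qmul _ _ H) (@qinv _ _ H) (qone H) (qinduced L).
Proof.
case=> L_ge0 Linv Lsub LH; split => [q | q | q | p q].
- exact: L_ge0.
- rewrite /qinduced LH -qmap_eq_qone (_ : qmap H (repr q) = q) //.
  exact: reprK.
- by rewrite /qinv qinducedE Linv.
- by rewrite /qmul qinducedE Lsub.
Qed.

End Induced.
End Quotient.

Theorem mainTheorem16 (R : realType) (T : topologicalType) (G : topGroup T)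
  (H : normalSubgroup G)
  (hcompact : compact [set: T])
  (l : nat -> T -> R) (ltilde : T -> R)
  (hl_cont : forall n, continuous (l n))
  (hl_len : forall n, is_length_function (gmul G) (ginv G) (gone G) (l n))
  (hunif : forall eps : R, 0 < eps ->
     exists N : nat, forall n, (N <= n)%N -> forall g : T, `|l n g - ltilde g| < eps)
  (hzero : forall g, nsg_set H g -> ltilde g = 0)
  (hpos : forall g, ~ nsg_set H g -> 0 < ltilde g) :
  exists linf : quotGroup H -> R,
    [/\ continuous linf,
        is_length_function (@qmul _ _ H) (@qinv _ _ H) (qone H) linf &
        forall g : T, l n g @[n --> \oo] --> linf (qmap H g)].
Proof.
have l_cvg := uniformly_cvg_pointwise hunif.
have lt_len : is_pseudo_length (gmul G) (ginv G) ltilde.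
  by apply: cvg_pseudo_length l_cvg => n; exact: length_function_pseudo (hl_len n).
have lt0 g : ltilde g = 0 <-> nsg_set H g.
  split=> [lt_g0 | /hzero //]; apply: contrapT => /hpos.
  by rewrite lt_g0 ltxx.
have lt_cosrel := pseudo_length_cosrel lt_len hzero.
exists (qinduced ltilde); split.
- exact/qinduced_continuous/(uniformly_cvg_continuous hunif).
- exact: qinduced_length.
- by move=> g; rewrite qinducedE.
Qed.
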